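(* Let $q>0$ and $\ell,\alpha\in\{0,1,2,\ldots\}$, and put $g_\ell(t)=\frac{\log^\ell(t+q)}{t+q}$ for $t\ge0$. Then $$\tilde\gamma_\ell(q)=\sum_{n=0}^{\alpha}(-1)^n\frac{\log^\ell(n+q)}{n+q}-(-1)^{\alpha}\frac{\log^\ell(\alpha+q)}{2(\alpha+q)}+\frac12\int_{\alpha}^\infty\overline E_0(-t)\,g_\ell'(t)\,dt,$$ where $g_\ell'$ is the derivative with respect to $t$. In particular, if $q\in\{1,2,3,\ldots\}$ and $\ell\in\{0,1,2,\ldots\}$, then $$\tilde\gamma_\ell(q)=\frac{\log^\ell q}{2q}+\frac{(-1)^q}{2}\sum_{j=q}^\infty(-1)^{j+1}\left(\frac{\log^\ell(j+1)}{j+1}-\frac{\log^\ell j}{j}\right).$$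
   Context: For $q>0$, $\zeta_E(z,q)=\sum_{n=0}^\infty (-1)^n (n+q)^{-z}$ for $\mathrm{Re}(z)>0$, extended by analytic continuation to an entire function of $z$. The modified Stieltjes constants $\tilde\gamma_k(q)$ are defined by the Taylor expansion $\zeta_E(z,q)=\sum_{k=0}^\infty\frac{(-1)^k\tilde\gamma_k(q)}{k!}(z-1)^k$. $\overline E_0$ is the quasi-periodic Euler function: $\overline E_0(t)=1$ for $0\le t<1$ and $\overline E_0(t+1)=-\overline E_0(t)$ for all real $t$. Convention: $\log^0 x=1$. *)

From Stdlib Require Import Reals.
From Coquelicot Require Import Coquelicot.
Open Scope R_scope.

(* Restriction of zeta_E(., q) to real z > 0: the (alternating, conditionally
   convergent) series sum_{n>=0} (-1)^n (n+q)^{-z}, as the limit of partial sums. *)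
Definition zetaE_real (q z : R) : R :=
  Series (fun n : nat => (-1) ^ n * Rpower (INR n + q) (- z)).

(* Modified Stieltjes constants: the Taylor expansion
   zeta_E(z,q) = sum_k (-1)^k gamma~_k(q)/k! (z-1)^k  means
   gamma~_k(q) = (-1)^k * (d/dz)^k zeta_E(z,q) at z = 1.
   Derivatives at z = 1 of the entire function coincide with the derivatives of
   its restriction to the real half-line z > 0 (which only depends on values near 1). *)
Definition gamma_tilde (k : nat) (q : R) : R :=
  (-1) ^ k * Derive_n (zetaE_real q) k 1.

(* Quasi-periodic Euler function: E0bar(t) = (-1)^floor(t);
   floor(t) = up t - 1 in Stdlib. *)
Definition E0bar (t : R) : R := powerRZ (-1) (up t - 1)%Z.

Definition g (l : nat) (q t : R) : R := ln (t + q) ^ l / (t + q).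

From Stdlib Require Import Reals Lra Lia.
From Coquelicot Require Import Coquelicot.
Open Scope R_scope.

(* For real z near 1, group the alternating series for zeta_E(z, q) into pairs
   x^-z - (x+1)^-z with x = 2m + q. By the mean value theorem the k-th
   z-derivative of such a pair is O(x^(-5/4)) uniformly for z in (1/2, 3/2), so
   the paired series may be differentiated term by term; at z = 1 this gives
   gamma~_l(q) = sum_n (-1)^n g_l(n). On (n, n+1) the integrand equals
   (-1)^(n+1) g_l', so the integral from alpha telescopes into
   sum_(n >= alpha) (-1)^(n+1) (g_l(n+1) - g_l(n)), twice the tail of that
   series plus (-1)^alpha g_l(alpha); the integer case is alpha = 0. *)

Lemma Rpower_le_Ropp_l (a b s : R) :
  0 <= s -> 0 < a <= b -> Rpower b (- s) <= Rpower a (- s).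
Proof.
  intros Hs Hab. rewrite !Rpower_Ropp.
  apply Rinv_le_contravar; [apply exp_pos | apply Rle_Rpower_l; lra].
Qed.

Lemma ln_pow_le_Rpower (j : nat) (s : R) :
  0 < s -> exists C, 0 < C /\ forall x, 1 <= x -> ln x ^ j <= C * Rpower x s.
Proof.
  revert s; induction j as [|j IH]; intros s Hs.
  - exists 1; split; [lra|]. intros x Hx.
    assert (H : Rpower x 0 <= Rpower x s) by (apply Rle_Rpower; lra).
    rewrite Rpower_O in H by lra. simpl; lra.
  - destruct (IH (s / 2)) as [C [HC Hj]]; [lra|].
    exists (2 / s * C); split; [apply Rmult_lt_0_compat; [apply Rdiv_lt_0_compat|]; lra|].
    intros x Hx.
    assert (HL : 0 <= ln x) by (rewrite <- ln_1; apply ln_le; lra).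
    assert (Hln : ln x <= 2 / s * Rpower x (s / 2)).
    { pose proof (exp_ineq1_le (s / 2 * ln x)).
      unfold Rpower. apply (Rmult_le_reg_l (s / 2)); [lra|].
      replace (s / 2 * (2 / s * exp (s / 2 * ln x))) with (exp (s / 2 * ln x)) by (field; lra).
      lra. }
    specialize (Hj x Hx).
    replace s with (s / 2 + s / 2) at 2 by field. rewrite Rpower_plus.
    assert (0 <= ln x ^ j) by (apply pow_le; lra).
    simpl. apply Rle_trans with ((2 / s * Rpower x (s / 2)) * (C * Rpower x (s / 2))).
    + apply Rmult_le_compat; lra.
    + right; ring.
Qed.

Lemma ln_pow_Rpower_vanishes (k : nat) (y eps : R) : 0 < y -> 0 < eps ->
  exists X, 1 <= X /\ forall x, X <= x -> Rabs (ln x ^ k * Rpower x (- y)) < eps.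
Proof.
  intros Hy Heps.
  destruct (ln_pow_le_Rpower k (y / 2)) as [C [HC Hk]]; [lra|].
  exists (Rmax 1 (exp (-2 / y * ln (eps / C) + 1))); split; [apply Rmax_l|]. intros x Hx.
  pose proof (Rmax_l 1 (exp (-2 / y * ln (eps / C) + 1))).
  pose proof (Rmax_r 1 (exp (-2 / y * ln (eps / C) + 1))).
  assert (Hlnx : -2 / y * ln (eps / C) + 1 <= ln x).
  { rewrite <- (ln_exp (-2 / y * ln (eps / C) + 1)).
    apply ln_le; [apply exp_pos | lra]. }
  assert (Hdecay : C * Rpower x (- (y / 2)) < eps).
  { unfold Rpower.
    replace eps with (C * exp (ln (eps / C))) by (rewrite exp_ln; [field|apply Rdiv_lt_0_compat]; lra).
    apply Rmult_lt_compat_l; [lra|]. apply exp_increasing.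
    apply (Rmult_le_compat_l (y / 2)) in Hlnx; [|lra].
    replace (y / 2 * (-2 / y * ln (eps / C) + 1)) with (- ln (eps / C) + y / 2) in Hlnx
      by (field; lra).
    lra. }
  assert (HR : 0 < Rpower x (- y)) by apply exp_pos.
  assert (0 <= ln x ^ k) by (apply pow_le; rewrite <- ln_1; apply ln_le; lra).
  rewrite Rabs_pos_eq by (apply Rmult_le_pos; lra).
  apply Rle_lt_trans with (C * Rpower x (y / 2) * Rpower x (- y)).
  - apply Rmult_le_compat_r; [lra | apply Hk; lra].
  - rewrite Rmult_assoc, <- Rpower_plus.
    replace (y / 2 + - y) with (- (y / 2)) by field. exact Hdecay.
Qed.

Lemma is_lim_seq_alt_vanishing (f : R -> R) :
  (forall eps, 0 < eps -> exists X, forall x, X <= x -> Rabs (f x) < eps) ->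
  is_lim_seq (fun n => (-1) ^ n * f (INR n)) 0.
Proof.
  intros Hf. apply is_lim_seq_spec. intros eps.
  destruct (Hf eps (cond_pos eps)) as [X HX].
  pose proof is_lim_seq_INR as HINR. apply is_lim_seq_spec in HINR.
  destruct (HINR X) as [N HN]. exists N. intros n Hn.
  rewrite Rminus_0_r, Rabs_mult, pow_1_abs, Rmult_1_l.
  apply HX. left. apply HN, Hn.
Qed.

Lemma ex_series_nonneg_bounded (a : nat -> R) (M : R) :
  (forall n, 0 <= a n) -> (forall n, sum_n a n <= M) -> ex_series a.
Proof.
  intros Hpos HM.
  destruct (ex_finite_lim_seq_incr (sum_n a) M) as [l Hl]; [|exact HM|].
  - intros n. rewrite sum_Sn. specialize (Hpos (S n)). change (plus ?x ?y) with (x + y). lra.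
  - exists l. exact Hl.
Qed.

Lemma ex_series_Rpower (q s : R) :
  0 < q -> 1 < s -> ex_series (fun n => Rpower (INR n + q) (- s)).
Proof.
  intros Hq Hs.
  set (T := fun x => Rpower x (1 - s)).
  assert (HT : forall x, 0 < T x) by (intros; apply exp_pos).
  assert (Hstep : forall n : nat,
    Rpower (INR (S n) + q) (- s) <= (T (INR n + q) - T (INR (S n) + q)) / (s - 1)).
  { intros n. rewrite S_INR. pose proof (pos_INR n).
    destruct (MVT_cor2 T (fun x => (1 - s) * Rpower x (1 - s - 1)) (INR n + q) (INR n + 1 + q))
      as [c [Hc Hcin]]; [lra | intros c Hc; apply derivable_pt_lim_power; lra |].
    replace (1 - s - 1) with (- s) in Hc by ring.
    assert (Rpower (INR n + 1 + q) (- s) <= Rpower c (- s)) by (apply Rpower_le_Ropp_l; lra).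
    apply (Rmult_le_reg_r (s - 1)); [lra|].
    unfold Rdiv; rewrite Rmult_assoc, Rinv_l, Rmult_1_r by lra.
    nra. }
  apply ex_series_nonneg_bounded with (Rpower q (- s) + T q / (s - 1)).
  - intros n; left; apply exp_pos.
  - assert (Hsum : forall n, sum_n (fun n => Rpower (INR n + q) (- s)) n
        <= Rpower q (- s) + (T q - T (INR n + q)) / (s - 1)).
    { induction n as [|n IH].
      - rewrite sum_O. simpl. rewrite Rplus_0_l, Rminus_diag. unfold Rdiv. lra.
      - rewrite sum_Sn. change (plus ?x ?y) with (x + y). specialize (Hstep n).
        unfold Rdiv in *. lra. }
    intros n. specialize (Hsum n). specialize (HT (INR n + q)).
    assert (0 < T (INR n + q) / (s - 1)) by (apply Rdiv_lt_0_compat; lra).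
    unfold Rdiv in *. lra.
Qed.

Lemma ex_series_le_eventually (v M : nat -> R) (m0 : nat) :
  (forall m, (m0 <= m)%nat -> Rabs (v m) <= M m) -> ex_series M -> ex_series v.
Proof.
  intros Hle HM. apply (ex_series_incr_n v m0).
  apply (@ex_series_le R_AbsRing R_CompleteNormedModule _ (fun k => M (m0 + k)%nat)).
  - intros k. apply Hle. lia.
  - apply (ex_series_incr_n M m0), HM.
Qed.

Lemma Series_tail_le (v M : nat -> R) (n : nat) :
  (forall k, (n < k)%nat -> Rabs (v k) <= M k) -> ex_series M ->
  Rabs (Series v - sum_f_R0 v n) <= Series M - sum_f_R0 M n.
Proof.
  intros Hle HM.
  assert (Hv : ex_series v) by (apply (ex_series_le_eventually v M (S n)); auto).
  rewrite (Series_incr_n v (S n)), (Series_incr_n M (S n)) by (lia || auto). simpl pred.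
  replace (sum_f_R0 v n + _ - sum_f_R0 v n) with (Series (fun k => v (S n + k)%nat)) by ring.
  replace (sum_f_R0 M n + _ - sum_f_R0 M n) with (Series (fun k => M (S n + k)%nat)) by ring.
  assert (Htail : forall k, Rabs (v (S n + k)%nat) <= M (S n + k)%nat) by (intros; apply Hle; lia).
  assert (HMt : ex_series (fun k => M (S n + k)%nat)) by (apply (ex_series_incr_n M (S n)), HM).
  assert (Habs : ex_series (fun k => Rabs (v (S n + k)%nat))).
  { apply (ex_series_le_eventually _ (fun k => M (S n + k)%nat) 0); [|exact HMt].
    intros k _. rewrite Rabs_Rabsolu. apply Htail. }
  eapply Rle_trans; [apply Series_Rabs, Habs|].
  apply Series_le; [|exact HMt]. intros k; split; [apply Rabs_pos | apply Htail].
Qed.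

Lemma CVU_Series_dominated (v : nat -> R -> R) (M : nat -> R) (m0 : nat) (c : R) (r : posreal) :
  (forall m y, (m0 <= m)%nat -> Boule c r y -> Rabs (v m y) <= M m) -> ex_series M ->
  CVU (fun n y => sum_f_R0 (fun m => v m y) n) (fun y => Series (fun m => v m y)) c r.
Proof.
  intros Hle HM eps Heps.
  pose proof (Series_correct M HM) as HMlim. apply is_series_Reals in HMlim.
  destruct (HMlim eps Heps) as [N HN].
  exists (N + m0)%nat. intros n y Hn Hy.
  eapply Rle_lt_trans; [apply Series_tail_le; [|exact HM]; intros k Hk; apply Hle; [lia | exact Hy]|].
  specialize (HN n ltac:(lia)). unfold R_dist in HN. rewrite Rabs_minus_sym in HN.
  pose proof (Rle_abs (Series M - sum_f_R0 M n)). lra.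
Qed.

Lemma Boule_interval (a b x : R) :
  a < x < b -> exists r : posreal, forall y, Boule x r y -> a < y < b.
Proof.
  intros Hx. destruct (open_and _ _ (open_gt a) (open_lt b) x Hx) as [r Hr].
  exists r. intros y Hy. apply Hr, Hy.
Qed.

Lemma is_derive_Series (u u' : nat -> R -> R) (M : nat -> R) (m0 : nat) (a b : R) :
  (forall m y, a < y < b -> is_derive (u m) y (u' m y)) ->
  (forall m y, (m0 <= m)%nat -> a < y < b -> Rabs (u' m y) <= M m) ->
  ex_series M ->
  (forall y, a < y < b -> ex_series (fun m => u m y)) ->
  forall x, a < x < b ->
  is_derive (fun y => Series (fun m => u m y)) x (Series (fun m => u' m x)).
Proof.
  intros Hd Hle HM Hu x Hx.
  destruct (Boule_interval a b x Hx) as [r Hr].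
  apply is_derive_Reals.
  apply (CVU_derivable (fun n y => sum_f_R0 (fun m => u m y) n)
                       (fun n y => sum_f_R0 (fun m => u' m y) n)
                       (fun y => Series (fun m => u m y)) (fun y => Series (fun m => u' m y)) x r).
  - apply (CVU_Series_dominated u' M m0); [intros m y Hm Hy; apply Hle, Hr |]; auto.
  - intros y Hy. apply is_series_Reals, Series_correct, Hu, Hr, Hy.
  - intros n y Hy. induction n as [|n IH]; simpl.
    + apply is_derive_Reals, Hd, Hr, Hy.
    + apply derivable_pt_lim_plus; [exact IH | apply is_derive_Reals, Hd, Hr, Hy].
  - unfold Boule. rewrite Rminus_diag, Rabs_R0. apply cond_pos.
Qed.

Lemma is_series_pairs (a : nat -> R) (l : R) :
  is_series (fun m => a (2 * m)%nat + a (2 * m + 1)%nat) l -> is_lim_seq a 0 ->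
  is_series a l.
Proof.
  intros Hpairs Ha.
  apply is_series_Reals in Hpairs. apply is_lim_seq_Reals in Ha. apply is_series_Reals.
  assert (Hodd : forall m, sum_f_R0 a (2 * m + 1)
                         = sum_f_R0 (fun m => a (2 * m)%nat + a (2 * m + 1)%nat) m).
  { induction m as [|m IH]; [simpl; ring|].
    replace (2 * S m + 1)%nat with (S (S (2 * m + 1))) by lia.
    rewrite !tech5, IH. simpl sum_f_R0.
    replace (S (2 * m + 1)) with (2 * S m)%nat by lia.
    replace (S (2 * S m)) with (2 * S m + 1)%nat by lia. ring. }
  intros eps Heps.
  destruct (Hpairs (eps / 2)) as [N1 HN1]; [lra|].
  destruct (Ha (eps / 2)) as [N2 HN2]; [lra|].
  exists (2 * N1 + N2 + 1)%nat. intros n Hn. unfold R_dist in *.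
  destruct (Nat.Even_or_Odd n) as [[m ->] | [m ->]].
  - replace (sum_f_R0 a (2 * m)) with (sum_f_R0 a (2 * m + 1) - a (2 * m + 1)%nat)
      by (replace (2 * m + 1)%nat with (S (2 * m)) by lia; rewrite tech5; ring).
    rewrite Hodd.
    specialize (HN1 m ltac:(lia)). specialize (HN2 (2 * m + 1)%nat ltac:(lia)).
    rewrite Rminus_0_r in HN2.
    pose proof (Rabs_triang (sum_f_R0 (fun m => a (2 * m)%nat + a (2 * m + 1)%nat) m - l)
                            (- a (2 * m + 1)%nat)) as Htri.
    rewrite Rabs_Ropp in Htri.
    replace (_ - a (2 * m + 1)%nat - l) with
      (sum_f_R0 (fun m => a (2 * m)%nat + a (2 * m + 1)%nat) m - l + - a (2 * m + 1)%nat)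
      by ring.
    lra.
  - rewrite Hodd. apply Rlt_trans with (eps / 2); [apply HN1; lia | lra].
Qed.

Definition zterm (k : nat) (x z : R) : R := (- ln x) ^ k * Rpower x (- z).

Definition zterm_dx (k : nat) (x z : R) : R :=
  - (INR k * (- ln x) ^ pred k + z * (- ln x) ^ k) * Rpower x (- z) / x.

Lemma is_derive_zterm_z (k : nat) (x z : R) :
  is_derive (zterm k x) z (zterm (S k) x z).
Proof. unfold zterm, Rpower. auto_derive; [auto | simpl; ring]. Qed.

Lemma is_derive_zterm_x (k : nat) (x z : R) :
  0 < x -> is_derive (fun x => zterm k x z) x (zterm_dx k x z).
Proof. intros Hx. unfold zterm, zterm_dx, Rpower. auto_derive; [auto | field; lra]. Qed.

Lemma zterm_dx_bound (k : nat) : exists K, 0 < K /\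
  forall x z, 1 <= x -> 1/2 <= z <= 3/2 -> Rabs (zterm_dx k x z) <= K * Rpower x (- (5/4)).
Proof.
  destruct (ln_pow_le_Rpower (pred k) (1/4)) as [C1 [HC1 H1]]; [lra|].
  destruct (ln_pow_le_Rpower k (1/4)) as [C2 [HC2 H2]]; [lra|].
  pose proof (pos_INR k) as Hk.
  exists (INR k * C1 + 3/2 * C2 + 1); split; [nra|]. intros x z Hx Hz.
  assert (Habs : forall j, Rabs ((- ln x) ^ j) = ln x ^ j).
  { intros j. rewrite <- RPow_abs, Rabs_Ropp, Rabs_pos_eq; [reflexivity|].
    rewrite <- ln_1. apply ln_le; lra. }
  assert (Hpoly : Rabs (INR k * (- ln x) ^ pred k + z * (- ln x) ^ k)
                  <= (INR k * C1 + 3/2 * C2) * Rpower x (1/4)).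
  { eapply Rle_trans; [apply Rabs_triang|].
    rewrite !Rabs_mult, !Habs, (Rabs_pos_eq (INR k)), (Rabs_pos_eq z) by lra.
    specialize (H1 x Hx). specialize (H2 x Hx).
    assert (0 <= ln x ^ k) by (apply pow_le; rewrite <- ln_1; apply ln_le; lra).
    assert (INR k * ln x ^ pred k <= INR k * (C1 * Rpower x (1/4)))
      by (apply Rmult_le_compat_l; lra).
    assert (z * ln x ^ k <= 3/2 * (C2 * Rpower x (1/4))) by (apply Rmult_le_compat; lra).
    lra. }
  assert (Hdecay : Rpower x (- z) / x <= Rpower x (- (3/2))).
  { unfold Rdiv. rewrite <- (Rpower_1 x) at 2 by lra.
    rewrite <- Rpower_Ropp, <- Rpower_plus. apply Rle_Rpower; lra. }
  assert (Hpos : 0 < Rpower x (- z) / x) by (apply Rdiv_lt_0_compat; [apply exp_pos | lra]).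
  unfold zterm_dx.
  replace (- _ * Rpower x (- z) / x)
    with (- ((INR k * (- ln x) ^ pred k + z * (- ln x) ^ k) * (Rpower x (- z) / x)))
    by (unfold Rdiv; ring).
  rewrite Rabs_Ropp, Rabs_mult, (Rabs_pos_eq (_ / x)) by lra.
  apply Rle_trans with ((INR k * C1 + 3/2 * C2) * Rpower x (1/4) * Rpower x (- (3/2))).
  - apply Rmult_le_compat; [apply Rabs_pos | lra | exact Hpoly | exact Hdecay].
  - rewrite Rmult_assoc, <- Rpower_plus. replace (1/4 + - (3/2)) with (- (5/4)) by field.
    assert (0 < Rpower x (- (5/4))) by apply exp_pos. nra.
Qed.

Lemma zterm_step_bound (k : nat) : exists K, 0 < K /\
  forall x z, 1 <= x -> 1/2 <= z <= 3/2 ->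
  Rabs (zterm k x z - zterm k (x + 1) z) <= K * Rpower x (- (5/4)).
Proof.
  destruct (zterm_dx_bound k) as [K [HK Hdx]]. exists K; split; [exact HK|].
  intros x z Hx Hz.
  destruct (MVT_cor2 (fun x => zterm k x z) (fun x => zterm_dx k x z) x (x + 1))
    as [c [Hc Hcin]]; [lra | intros c Hc; apply is_derive_Reals, is_derive_zterm_x; lra |].
  rewrite <- Rabs_Ropp, Ropp_minus_distr, Hc, Rplus_minus_l, Rmult_1_r.
  eapply Rle_trans; [apply Hdx; lra|].
  apply Rmult_le_compat_l; [lra | apply Rpower_le_Ropp_l; lra].
Qed.

Definition zpair (q : R) (k m : nat) (z : R) : R :=
  zterm k (INR (2 * m) + q) z - zterm k (INR (2 * m) + q + 1) z.

Definition zpair_sum (q : R) (k : nat) (z : R) : R := Series (fun m => zpair q k m z).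

Lemma zpair_dominated (q : R) (k : nat) : 0 < q -> exists M, ex_series M /\
  forall m z, (1 <= m)%nat -> 1/2 <= z <= 3/2 -> Rabs (zpair q k m z) <= M m.
Proof.
  intros Hq. destruct (zterm_step_bound k) as [K [HK Hstep]].
  exists (fun m => K * Rpower (INR m + q) (- (5/4))); split.
  - apply (ex_series_scal_l K (fun m => Rpower (INR m + q) (- (5/4)))).
    apply ex_series_Rpower; lra.
  - intros m z Hm Hz. apply le_INR in Hm. simpl INR in Hm.
    assert (H2m : INR (2 * m) = 2 * INR m) by (rewrite mult_INR; simpl; ring).
    unfold zpair. rewrite H2m.
    eapply Rle_trans; [apply Hstep; lra|].
    apply Rmult_le_compat_l; [lra|].
    apply Rpower_le_Ropp_l; lra.
Qed.

Lemma ex_series_zpair (q : R) (k : nat) (z : R) :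
  0 < q -> 1/2 <= z <= 3/2 -> ex_series (fun m => zpair q k m z).
Proof.
  intros Hq Hz. destruct (zpair_dominated q k Hq) as [M [HM Hle]].
  apply (ex_series_le_eventually _ M 1); auto.
Qed.

Lemma is_derive_zpair_sum (q : R) (k : nat) (z : R) :
  0 < q -> 1/2 < z < 3/2 -> is_derive (zpair_sum q k) z (zpair_sum q (S k) z).
Proof.
  intros Hq Hz. destruct (zpair_dominated q (S k) Hq) as [M [HM Hle]].
  apply (is_derive_Series (zpair q k) (zpair q (S k)) M 1 (1/2) (3/2)); auto.
  - intros m y _. apply @is_derive_minus; apply is_derive_zterm_z.
  - intros m y Hm Hy. apply Hle; auto; lra.
  - intros y Hy. apply ex_series_zpair; auto; lra.
Qed.

Lemma zetaE_real_zpair_sum (q z : R) :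
  0 < q -> 1/2 <= z <= 3/2 -> zetaE_real q z = zpair_sum q 0 z.
Proof.
  intros Hq Hz. unfold zetaE_real. apply is_series_unique, is_series_pairs.
  - apply (is_series_ext (fun m => zpair q 0 m z)).
    + intros m. unfold zpair, zterm.
      rewrite pow_1_even, Nat.add_1_r, pow_1_odd, S_INR, !pow_O.
      replace (INR (2 * m) + 1 + q) with (INR (2 * m) + q + 1) by ring.
      match goal with |- ?a = ?b => change (@eq R a b) end. ring.
    + apply Series_correct, ex_series_zpair; auto.
  - apply (is_lim_seq_alt_vanishing (fun x => Rpower (x + q) (- z))).
    intros eps Heps.
    destruct (ln_pow_Rpower_vanishes 0 z eps) as [X [_ Hsmall]]; [lra | exact Heps |].
    exists X. intros x Hx. rewrite <- (Rmult_1_l (Rpower _ _)).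
    apply (Hsmall (x + q)). lra.
Qed.

Lemma Derive_n_zetaE_real (q : R) (k : nat) (z : R) :
  0 < q -> 1/2 < z < 3/2 -> Derive_n (zetaE_real q) k z = zpair_sum q k z.
Proof.
  intros Hq. revert z. induction k as [|k IH]; intros z Hz; simpl.
  - apply zetaE_real_zpair_sum; lra.
  - rewrite (Derive_ext_loc _ (zpair_sum q k)).
    + apply is_derive_unique, is_derive_zpair_sum; auto.
    + apply (filter_imp (fun y => 1/2 < y < 3/2)); [exact IH|].
      apply (open_and _ _ (open_gt _) (open_lt _)), Hz.
Qed.

Definition alt_g (l : nat) (q : R) (n : nat) : R := (-1) ^ n * g l q (INR n).

Lemma zterm_at_1 (l : nat) (x : R) : 0 < x -> (-1) ^ l * zterm l x 1 = ln x ^ l / x.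
Proof.
  intros Hx. unfold zterm. rewrite Rpower_Ropp, Rpower_1 by exact Hx.
  rewrite <- Rmult_assoc, <- Rpow_mult_distr. unfold Rdiv. do 2 f_equal. ring.
Qed.

Lemma g_vanishes (l : nat) (q eps : R) : 0 < q -> 0 < eps ->
  exists X, forall t, X <= t -> Rabs (g l q t) < eps.
Proof.
  intros Hq Heps.
  destruct (ln_pow_Rpower_vanishes l 1 eps) as [X [HX Hsmall]]; [lra | exact Heps |].
  exists X. intros t Ht. unfold g, Rdiv.
  rewrite <- (Rpower_1 (t + q)) at 2 by lra. rewrite <- Rpower_Ropp.
  apply Hsmall. lra.
Qed.

Lemma is_series_alt_g (l : nat) (q : R) :
  0 < q -> is_series (alt_g l q) (gamma_tilde l q).
Proof.
  intros Hq. unfold gamma_tilde. rewrite Derive_n_zetaE_real by (auto; lra).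
  apply is_series_pairs.
  - apply (is_series_ext (fun m => (-1) ^ l * zpair q l m 1)).
    + intros m. pose proof (pos_INR (2 * m)).
      unfold zpair, alt_g, g. rewrite Rmult_minus_distr_l, !zterm_at_1 by lra.
      rewrite pow_1_even, Nat.add_1_r, pow_1_odd, S_INR.
      replace (INR (2 * m) + 1 + q) with (INR (2 * m) + q + 1) by ring.
      match goal with |- ?a = ?b => change (@eq R a b) end. ring.
    + apply (is_series_scal_l ((-1) ^ l) (fun m => zpair q l m 1)).
      apply Series_correct, ex_series_zpair; auto; lra.
  - apply is_lim_seq_alt_vanishing. intros eps Heps. apply g_vanishes; assumption.
Qed.

Definition dg (l : nat) (q t : R) : R :=
  (INR l * ln (t + q) ^ pred l - ln (t + q) ^ l) / (t + q) ^ 2.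

Lemma is_derive_g (l : nat) (q t : R) : 0 < t + q -> is_derive (g l q) t (dg l q t).
Proof. intros Ht. unfold g, dg. auto_derive; [repeat split; lra | field; lra]. Qed.

Lemma E0bar_opp_between (n : nat) (t : R) :
  INR n < t < INR n + 1 -> E0bar (- t) = (-1) ^ S n.
Proof.
  intros Ht. unfold E0bar.
  rewrite up_Zfloor, (Zfloor_eq (- Z.of_nat (S n)) (- t)).
  - rewrite Z.add_simpl_r, powerRZ_neg', <- pow_powerRZ.
    rewrite <- pow_inv. f_equal. field.
  - rewrite opp_IZR, <- INR_IZR_INZ, S_INR. lra.
Qed.

Definition euler_integrand (l : nat) (q t : R) : R := E0bar (- t) * Derive (g l q) t.

Lemma is_RInt_euler_integrand_unit (l : nat) (q : R) (n : nat) (a b : R) :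
  0 < q -> INR n <= a <= b -> b <= INR n + 1 ->
  is_RInt (euler_integrand l q) a b ((-1) ^ S n * (g l q b - g l q a)).
Proof.
  intros Hq Ha Hb. pose proof (pos_INR n).
  rewrite Rmult_minus_distr_l.
  apply (is_RInt_ext (fun t => (-1) ^ S n * dg l q t)).
  - rewrite Rmin_left, Rmax_right by lra. intros t Ht.
    unfold euler_integrand. rewrite (E0bar_opp_between n) by lra.
    f_equal. symmetry. apply is_derive_unique, is_derive_g. lra.
  - apply (is_RInt_derive (fun t => (-1) ^ S n * g l q t)); rewrite Rmin_left, Rmax_right by lra.
    + intros t Ht. apply (is_derive_scal (g l q)), is_derive_g. lra.
    + intros t Ht. apply (@ex_derive_continuous R_AbsRing R_NormedModule).
      unfold dg. auto_derive. repeat split; try lra. apply Rgt_not_eq. nra.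
Qed.

Lemma is_RInt_euler_integrand_nat (l : nat) (q : R) (alpha j : nat) : 0 < q ->
  is_RInt (euler_integrand l q) (INR alpha) (INR (alpha + S j))
    (sum_f_R0 (fun k => alt_g l q (S (alpha + k)) + alt_g l q (alpha + k)) j).
Proof.
  intros Hq.
  assert (Hunit : forall n, is_RInt (euler_integrand l q) (INR n) (INR (S n))
                                    (alt_g l q (S n) + alt_g l q n)).
  { intros n. unfold alt_g.
    replace ((-1) ^ S n * _ + _) with ((-1) ^ S n * (g l q (INR (S n)) - g l q (INR n)))
      by (simpl; ring).
    apply is_RInt_euler_integrand_unit; rewrite ?S_INR; lra. }
  induction j as [|j IH].
  - simpl sum_f_R0. rewrite Nat.add_0_r, Nat.add_1_r. apply Hunit.
  - simpl sum_f_R0. replace (alpha + S (S j))%nat with (S (alpha + S j)) by lia.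
    exact (is_RInt_Chasles _ _ _ _ _ _ IH (Hunit _)).
Qed.

Lemma is_RInt_gen_p_infty (f : R -> R) (a I : R) :
  (forall eps : posreal, exists B, forall b, B < b ->
     exists v, is_RInt f a b v /\ Rabs (v - I) < eps) ->
  is_RInt_gen f (at_point a) (Rbar_locally p_infty) I.
Proof.
  intros Hlim P [eps HP]. destruct (Hlim eps) as [B HB].
  apply (Filter_prod _ _ _ (fun x => x = a) (fun b => B < b)); [reflexivity | exists B; auto |].
  intros x b -> Hb. destruct (HB b Hb) as [v [Hv Hclose]].
  exists v. split; [exact Hv | apply HP, Hclose].
Qed.

Lemma is_RInt_gen_euler_integrand (l : nat) (q : R) (alpha : nat) (I : R) : 0 < q ->
  is_series (fun k => alt_g l q (S (alpha + k)) + alt_g l q (alpha + k)) I ->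
  is_RInt_gen (euler_integrand l q) (at_point (INR alpha)) (Rbar_locally p_infty) I.
Proof.
  intros Hq HI. apply is_series_Reals in HI.
  apply is_RInt_gen_p_infty. intros eps. pose proof (cond_pos eps).
  destruct (HI (eps / 2)) as [N HN]; [lra|].
  destruct (g_vanishes l q (eps / 4)) as [X HX]; [exact Hq | lra |].
  pose proof (pos_INR alpha). pose proof (pos_INR N).
  exists (INR alpha + INR N + Rabs X + 2). intros b Hb.
  pose proof (Rle_abs X).
  destruct (nfloor_ex (b - INR alpha - 1)) as [n Hn]; [pose proof (Rabs_pos X); lra|].
  set (A := INR (alpha + S n)).
  assert (HA : A = INR alpha + INR n + 1) by (unfold A; rewrite plus_INR, S_INR; ring).
  set (Sn := sum_f_R0 (fun k => alt_g l q (S (alpha + k)) + alt_g l q (alpha + k)) n).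
  exists (Sn + (-1) ^ S (alpha + S n) * (g l q b - g l q A)). split.
  - apply (is_RInt_Chasles _ (INR alpha) A b Sn).
    + apply is_RInt_euler_integrand_nat, Hq.
    + apply is_RInt_euler_integrand_unit; [exact Hq | fold A; lra | fold A; lra].
  - assert (HnN : (N <= n)%nat) by (apply INR_le; pose proof (Rabs_pos X); lra).
    specialize (HN n HnN). unfold R_dist in HN. fold Sn in HN.
    assert (Hgb : Rabs (g l q b) < eps / 4) by (apply HX; lra).
    assert (HgA : Rabs (g l q A) < eps / 4) by (apply HX; pose proof (pos_INR n); lra).
    replace (Sn + _ - I) with ((Sn - I) + (-1) ^ S (alpha + S n) * (g l q b - g l q A)) by ring.
    eapply Rle_lt_trans; [apply Rabs_triang|].
    rewrite Rabs_mult, pow_1_abs, Rmult_1_l.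
    pose proof (Rabs_triang (g l q b) (- g l q A)) as Htri. rewrite Rabs_Ropp in Htri.
    unfold Rminus in *. lra.
Qed.

Lemma is_series_shift_pairs (a : nat -> R) (s : R) (alpha : nat) : is_series a s ->
  is_series (fun k => a (S (alpha + k)) + a (alpha + k)%nat)
            (2 * (s - sum_f_R0 a alpha) + a alpha).
Proof.
  intros Ha.
  set (T := s - sum_f_R0 a alpha).
  assert (HT1 : is_series (fun k => a (S alpha + k)%nat) T).
  { apply is_series_incr_n; [lia|]. rewrite sum_n_Reals. simpl pred.
    match goal with |- is_series _ ?l => replace l with s; [exact Ha|] end.
    unfold T, plus. simpl. ring. }
  assert (HT0 : is_series (fun k => a (alpha + k)%nat) (T + a alpha)).
  { apply is_series_decr_1. rewrite Nat.add_0_r.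
    match goal with |- is_series _ ?l => replace l with T by (unfold plus, opp; simpl; ring) end.
    apply (is_series_ext _ _ _ (fun k => eq_sym (f_equal a (Nat.add_succ_r alpha k))) HT1). }
  replace (2 * T + a alpha) with (T + (T + a alpha)) by ring.
  exact (is_series_plus _ _ _ _ HT1 HT0).
Qed.

Lemma gamma_tilde_euler_integral (q : R) (l alpha : nat) : 0 < q ->
  exists I : R,
    is_RInt_gen (euler_integrand l q) (at_point (INR alpha)) (Rbar_locally p_infty) I /\
    gamma_tilde l q = sum_f_R0 (alt_g l q) alpha - alt_g l q alpha / 2 + / 2 * I.
Proof.
  intros Hq.
  pose proof (is_series_shift_pairs _ _ alpha (is_series_alt_g l q Hq)) as Hpairs.
  eexists; split; [exact (is_RInt_gen_euler_integrand l q alpha _ Hq Hpairs)|].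
  field.
Qed.

Lemma gamma_tilde_nat_series (q l : nat) : (1 <= q)%nat ->
  exists S : R,
    is_series (fun k => (-1) ^ (k + q + 1) *
                 (ln (INR (k + q) + 1) ^ l / (INR (k + q) + 1)
                  - ln (INR (k + q)) ^ l / INR (k + q))) S /\
    gamma_tilde l (INR q) = alt_g l (INR q) 0 / 2 + (-1) ^ q / 2 * S.
Proof.
  intros Hq.
  assert (HQ : 0 < INR q) by (apply lt_0_INR; lia).
  pose proof (is_series_shift_pairs _ _ 0 (is_series_alt_g l (INR q) HQ)) as Hpairs.
  exists ((-1) ^ q * (2 * (gamma_tilde l (INR q) - alt_g l (INR q) 0) + alt_g l (INR q) 0)).
  split.
  - eapply is_series_ext; [|exact (is_series_scal_l ((-1) ^ q) _ _ Hpairs)].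
    intros k. unfold alt_g, g. rewrite Nat.add_0_l, S_INR, plus_INR, !pow_add.
    replace (INR k + 1 + INR q) with (INR k + INR q + 1) by ring.
    change (scal ?c ?x) with (c * x). simpl. ring.
  - assert (Hsq : (-1) ^ q * (-1) ^ q = 1).
    { rewrite <- pow_add. replace (q + q)%nat with (2 * q)%nat by lia. apply pow_1_even. }
    transitivity (alt_g l (INR q) 0 / 2 + (-1) ^ q * (-1) ^ q
                  * (2 * (gamma_tilde l (INR q) - alt_g l (INR q) 0) + alt_g l (INR q) 0) / 2).
    + rewrite Hsq. field.
    + unfold Rdiv. ring.
Qed.

Theorem theorem3p6 :
  (forall (q : R) (l alpha : nat), 0 < q ->
     exists I : R,
       is_RInt_gen (fun t => E0bar (- t) * Derive (g l q) t)
         (at_point (INR alpha)) (Rbar_locally p_infty) I /\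
       gamma_tilde l q =
         sum_f_R0 (fun n => (-1) ^ n * (ln (INR n + q) ^ l / (INR n + q))) alpha
         - (-1) ^ alpha * (ln (INR alpha + q) ^ l / (2 * (INR alpha + q)))
         + / 2 * I) /\
  (forall (q l : nat), (1 <= q)%nat ->
     exists S : R,
       is_series (fun k => (-1) ^ (k + q + 1) *
                    (ln (INR (k + q) + 1) ^ l / (INR (k + q) + 1)
                     - ln (INR (k + q)) ^ l / INR (k + q))) S /\
       gamma_tilde l (INR q) =
         ln (INR q) ^ l / (2 * INR q) + (-1) ^ q / 2 * S).
Proof.
  split.
  - intros q l alpha Hq.
    destruct (gamma_tilde_euler_integral q l alpha Hq) as [I [HI Hgamma]].
    exists I; split; [exact HI|]. rewrite Hgamma.
    pose proof (pos_INR alpha). unfold alt_g, g. field. lra.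
  - intros q l Hq.
    destruct (gamma_tilde_nat_series q l Hq) as [S [HS Hgamma]].
    exists S; split; [exact HS|]. rewrite Hgamma.
    unfold alt_g, g. simpl. rewrite Rplus_0_l. field. apply not_0_INR. lia.
Qed.
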